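(* Let $(n_k)_{k\ge0}$ be a strictly increasing sequence of nonnegative integers. Then $(y_{n_k})_{k\ge0}$ is a Stieltjes moment sequence for every Stieltjes moment sequence $(y_n)_{n\ge0}$ if and only if there exist $d,\ell\in\mathbb{N}$ such that $n_k=dk+\ell$ for all $k\in\mathbb{N}$.
   Context: A Stieltjes moment sequence is a sequence $y$ for which there is a nonnegative Borel measure $\mu$ supported in $[0,\infty)$ with $y_n=\int x^n\,d\mu$ for all $n\ge0$. $\mathbb{N}=\{0,1,2,\dots\}$. *)

From Stdlib Require Import Reals List.
Open Scope R_scope.

Inductive borel : (R -> Prop) -> Prop :=
| borel_lt (a : R) : borel (fun x => x < a)
| borel_compl (A : R -> Prop) : borel A -> borel (fun x => ~ A x)
| borel_union (A : nat -> R -> Prop) :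
    (forall k, borel (A k)) -> borel (fun x => exists k, A k x).

Definition borel_measure (mu : (R -> Prop) -> R) : Prop :=
  (forall A, borel A -> 0 <= mu A) /\
  mu (fun _ => False) = 0 /\
  (forall A : nat -> R -> Prop,
     (forall k, borel (A k)) ->
     (forall i j x, i <> j -> A i x -> A j x -> False) ->
     infinite_sum (fun k => mu (A k)) (mu (fun x => exists k, A k x))).

Definition supported_nonneg (mu : (R -> Prop) -> R) : Prop :=
  mu (fun x => x < 0) = 0.

(* s is the integral over [0,+oo) of a nonnegative simple function
   sum_{i<N} c_i 1_{A_i} (A_i disjoint Borel subsets of [0,+oo)) lying below f. *)
Definition simple_below (mu : (R -> Prop) -> R) (f : R -> R) (s : R) : Prop :=
  exists (N : nat) (c : nat -> R) (A : nat -> R -> Prop),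
    (forall i, (i < N)%nat ->
       0 <= c i /\ borel (A i) /\ (forall x, A i x -> 0 <= x /\ c i <= f x)) /\
    (forall i j x, (i < N)%nat -> (j < N)%nat -> i <> j -> A i x -> A j x -> False) /\
    s = fold_right Rplus 0 (map (fun i => c i * mu (A i)) (seq 0 N)).

(* Lebesgue integral over [0,+oo) of a nonnegative function f equals I
   (in particular it is finite): I is the supremum of the integrals of
   nonnegative simple functions below f. *)
Definition integral_nonneg_eq (mu : (R -> Prop) -> R) (f : R -> R) (I : R) : Prop :=
  is_lub (simple_below mu f) I.

Definition stieltjes_moment_seq (y : nat -> R) : Prop :=
  exists mu : (R -> Prop) -> R,
    borel_measure mu /\ supported_nonneg mu /\
    forall n : nat, integral_nonneg_eq mu (fun x => x ^ n) (y n).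

From Stdlib Require Import Reals Lra Lia List Classical ClassicalDescription FunctionalExtensionality PropExtensionality.
Open Scope R_scope.

(* Necessity: the Dirac mass at a > 0 has the moment sequence (a^m), and every
   Stieltjes moment sequence z is log-convex, z_(k+1)^2 <= z_k z_(k+2) (integrate
   the pointwise bound 2 x^(k+1) <= c x^k + x^(k+2)/c).  For z_k = a^(n_k) with
   a = 2 and a = 1/2 this gives 2 n_(k+1) = n_k + n_(k+2), so n is affine.
   Sufficiency: if mu represents y, then y_(dk+l) is the k-th moment of the image
   of x^l dmu(x) under x |-> x^d, i.e. of nu(A) = integral of x^l over {x^d in A}.
   Integrals being suprema of integrals of simple functions, a simple function
   below t^k for nu pulls back to one below x^(dk+l) for mu and conversely, the
   latter after splitting each level c as r^(dk) r^l with r the (dk+l)-th root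
   of c. *)

Definition sumN (N : nat) (f : nat -> R) : R := fold_right Rplus 0 (map f (seq 0 N)).

Lemma sumN_0 f : sumN 0 f = 0.
Proof. reflexivity. Qed.

Lemma sumN_S N f : sumN (S N) f = sumN N f + f N.
Proof.
  unfold sumN; rewrite seq_S, map_app, fold_right_app; simpl.
  generalize (map f (seq 0 N)); induction l; simpl; lra.
Qed.

Lemma sumN_ext N f g : (forall i, (i < N)%nat -> f i = g i) -> sumN N f = sumN N g.
Proof.
  induction N as [|N IH]; intros H; [reflexivity|].
  rewrite !sumN_S, IH, H; auto; intros; apply H; lia.
Qed.

Lemma sumN_le N f g : (forall i, (i < N)%nat -> f i <= g i) -> sumN N f <= sumN N g.
Proof.
  induction N as [|N IH]; intros H; rewrite ?sumN_S; [apply Rle_refl|].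
  apply Rplus_le_compat; [apply IH; intros|]; apply H; lia.
Qed.

Lemma sumN_const0 N : sumN N (fun _ => 0) = 0.
Proof. induction N as [|N IH]; [reflexivity|]. rewrite sumN_S, IH; lra. Qed.

Lemma sumN_plus N f g : sumN N (fun i => f i + g i) = sumN N f + sumN N g.
Proof. induction N as [|N IH]; [rewrite !sumN_0; lra|]. rewrite !sumN_S, IH; lra. Qed.

Lemma sumN_scal N a f : sumN N (fun i => a * f i) = a * sumN N f.
Proof. induction N as [|N IH]; [rewrite !sumN_0; lra|]. rewrite !sumN_S, IH; lra. Qed.

Lemma sumN_add N1 N2 f : sumN (N1 + N2) f = sumN N1 f + sumN N2 (fun i => f (N1 + i)%nat).
Proof.
  induction N2 as [|N2 IH]; [rewrite Nat.add_0_r, sumN_0; lra|].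
  rewrite Nat.add_succ_r, !sumN_S, IH; lra.
Qed.

Lemma sumN_sum_f_R0 n f : sumN (S n) f = sum_f_R0 f n.
Proof. induction n as [|n IH]; [unfold sumN; simpl; lra|]. rewrite sumN_S, IH; reflexivity. Qed.

Lemma sum_f_R0_sumN_comm K N (g : nat -> nat -> R) :
  sum_f_R0 (fun k => sumN N (fun i => g i k)) K = sumN N (fun i => sum_f_R0 (g i) K).
Proof. induction K as [|K IH]; simpl; [reflexivity|]. rewrite IH, <- sumN_plus; reflexivity. Qed.

Lemma Un_cv_sumN N (c : nat -> R) (g : nat -> nat -> R) (G : nat -> R) :
  (forall i, (i < N)%nat -> Un_cv (fun K => sum_f_R0 (g i) K) (G i)) ->
  Un_cv (fun K => sumN N (fun i => c i * sum_f_R0 (g i) K)) (sumN N (fun i => c i * G i)).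
Proof.
  induction N as [|N IH]; intros H.
  - intros e He; exists 0%nat; intros; unfold Rdist; rewrite !sumN_0, Rminus_0_r, Rabs_R0; lra.
  - rewrite sumN_S.
    apply (Un_cv_ext (fun K => sumN N (fun i => c i * sum_f_R0 (g i) K) + c N * sum_f_R0 (g N) K)).
    { intros; rewrite sumN_S; reflexivity. }
    apply CV_plus; [apply IH; intros; apply H; lia|].
    apply (CV_mult (fun _ => c N)); [|apply H; lia].
    intros e He; exists 0%nat; intros; unfold Rdist; rewrite Rminus_diag, Rabs_R0; lra.
Qed.

Lemma set_ext (A B : R -> Prop) : (forall x, A x <-> B x) -> A = B.
Proof. intros H; apply functional_extensionality; intros x; apply propositional_extensionality; auto. Qed.

Lemma borel_ext A B : borel A -> (forall x, A x <-> B x) -> borel B.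
Proof. intros HA H; rewrite <- (set_ext A B H); auto. Qed.

Lemma borel_or A B : borel A -> borel B -> borel (fun x => A x \/ B x).
Proof.
  intros HA HB.
  apply borel_ext with (fun x => exists k, (match k with O => A | S _ => B end) x).
  - apply borel_union; intros [|k]; auto.
  - intros x; split; [intros [[|k] Hk]; auto|intros [H|H]; [exists O|exists 1%nat]; auto].
Qed.

Lemma borel_and A B : borel A -> borel B -> borel (fun x => A x /\ B x).
Proof.
  intros HA HB. apply borel_ext with (fun x => ~ (~ A x \/ ~ B x)).
  - apply borel_compl, borel_or; apply borel_compl; auto.
  - intros x; split; [intros H; split; apply NNPP; tauto|tauto].
Qed.

Lemma borel_ge a : borel (fun x => a <= x).
Proof. apply borel_ext with (fun x => ~ x < a); [apply borel_compl, borel_lt|intros; lra]. Qed.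

Lemma borel_le a : borel (fun x => x <= a).
Proof.
  apply borel_ext with (fun x => ~ (exists k, ~ x < a + / INR (S k))).
  - apply borel_compl, borel_union; intros k; apply borel_compl, borel_lt.
  - intros x; split.
    + intros H. apply Rnot_lt_le; intros Hlt.
      destruct (archimed_cor1 (x - a)) as [N [HN1 HN2]]; [lra|].
      apply H; exists (pred N); replace (S (pred N)) with N by lia; lra.
    + intros H [k Hk]; apply Hk.
      assert (0 < / INR (S k)) by (apply Rinv_0_lt_compat, lt_0_INR; lia); lra.
Qed.

Lemma borel_eq a : borel (fun x => x = a).
Proof.
  apply borel_ext with (fun x => a <= x /\ x <= a);
    [apply borel_and; [apply borel_ge|apply borel_le]|intros; lra].
Qed.

Lemma borel_False : borel (fun _ => False).
Proof.
  apply borel_ext with (fun x => ~ (x < 0 \/ 0 <= x)); [|intros; lra].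
  apply borel_compl, borel_or; [apply borel_lt|apply borel_ge].
Qed.

(* Preimages are taken inside [0, +oo), where x^d and its inverse are monotone. *)
Lemma borel_preimage_nonneg (phi : R -> R) :
  (forall a, borel (fun x => 0 <= x /\ phi x < a)) ->
  forall A, borel A -> borel (fun x => 0 <= x /\ A (phi x)).
Proof.
  intros Hphi A HA; induction HA as [a|A _ IH|A _ IH].
  - apply Hphi.
  - apply borel_ext with (fun x => 0 <= x /\ ~ (0 <= x /\ A (phi x))); [|intros x; tauto].
    apply borel_and; [apply borel_ge|apply borel_compl; auto].
  - apply borel_ext with (fun x => exists k, 0 <= x /\ A k (phi x)); [apply borel_union; auto|].
    intros x; split; [intros [k [H1 H2]]; split; eauto|intros [H1 [k H2]]; eauto].
Qed.

Lemma pow_lt_mono_base m x y : (1 <= m)%nat -> 0 <= x -> x < y -> x ^ m < y ^ m.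
Proof.
  intros Hm Hx Hxy; induction m as [|m IH]; [lia|].
  destruct m; [simpl; lra|].
  assert (x ^ S m < y ^ S m) by (apply IH; lia).
  assert (0 <= x ^ S m) by (apply pow_le; auto).
  simpl in *; nra.
Qed.

Lemma pow_le_reg_base m x y : (1 <= m)%nat -> 0 <= y -> x ^ m <= y ^ m -> x <= y.
Proof.
  intros Hm Hy H; apply Rnot_lt_le; intros Hl.
  pose proof (pow_lt_mono_base m y x Hm Hy Hl); lra.
Qed.

(* Nonnegative m-th root, extended by 0 on (-oo, 0]. *)
Definition nroot (m : nat) (t : R) : R := if Rlt_dec 0 t then Rpower t (/ INR m) else 0.

Lemma nroot_nonneg m t : 0 <= nroot m t.
Proof. unfold nroot; destruct Rlt_dec; [left; apply exp_pos|lra]. Qed.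

Lemma nroot_pow m t : (1 <= m)%nat -> 0 <= t -> nroot m t ^ m = t.
Proof.
  intros Hm Ht; unfold nroot; destruct Rlt_dec.
  - rewrite <- Rpower_pow by apply exp_pos.
    rewrite Rpower_mult, Rinv_l, Rpower_1; auto; apply not_0_INR; lia.
  - destruct m; [lia|]; simpl; lra.
Qed.

Lemma pow_nroot m x : (1 <= m)%nat -> 0 <= x -> nroot m (x ^ m) = x.
Proof.
  intros Hm Hx.
  pose proof (nroot_pow m _ Hm (pow_le _ m Hx)); pose proof (nroot_nonneg m (x ^ m)).
  apply Rle_antisym; apply (pow_le_reg_base m); auto; lra.
Qed.

Lemma nroot_le m t x : (1 <= m)%nat -> 0 <= t -> 0 <= x -> t <= x ^ m -> nroot m t <= x.
Proof. intros Hm Ht Hx H; apply (pow_le_reg_base m); auto; rewrite nroot_pow; auto. Qed.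

Definition lubR (E : R -> Prop) : R :=
  match excluded_middle_informative (bound E /\ exists x, E x) with
  | left H => proj1_sig (completeness E (proj1 H) (proj2 H))
  | right _ => 0
  end.

Lemma lubR_spec E : bound E -> (exists x, E x) -> is_lub E (lubR E).
Proof.
  intros Hb He; unfold lubR; destruct excluded_middle_informative as [H|H];
    [destruct completeness; auto|exfalso; auto].
Qed.

Lemma is_lub_approx E l eps : is_lub E l -> 0 < eps -> exists x, E x /\ l - eps < x.
Proof.
  intros [Hub Hl] He; apply NNPP; intros Hn.
  enough (l <= l - eps) by lra.
  apply Hl; intros x Hx; apply Rnot_lt_le; intros Hlt; eauto.
Qed.

(* Optimise one coordinate at a time. *)
Lemma sumN_is_lub_le M (T : nat -> R -> Prop) (L a : nat -> R) (B : R) :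
  (forall j, (j < M)%nat -> is_lub (T j) (L j) /\ exists x, T j x) ->
  (forall j, (j < M)%nat -> 0 <= a j) ->
  (forall s : nat -> R, (forall j, (j < M)%nat -> T j (s j)) -> sumN M (fun j => a j * s j) <= B) ->
  sumN M (fun j => a j * L j) <= B.
Proof.
  revert B; induction M as [|M IH]; intros B HT Ha H.
  - apply (H (fun _ => 0)); intros; lia.
  - rewrite sumN_S.
    assert (Hlast : forall t, T M t -> sumN M (fun j => a j * L j) <= B - a M * t).
    { intros t Ht; apply IH; [intros; apply HT; lia|intros; apply Ha; lia|].
      intros s Hs; specialize (H (fun j => if Nat.eqb j M then t else s j)).
      rewrite sumN_S, Nat.eqb_refl, (sumN_ext M _ (fun j => a j * s j)) in H.
      - enough (sumN M (fun j => a j * s j) + a M * t <= B) by lra.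
        apply H; intros j Hj; destruct (Nat.eqb_spec j M); subst; auto; apply Hs; lia.
      - intros i Hi; destruct (Nat.eqb_spec i M); [lia|reflexivity]. }
    destruct (HT M ltac:(lia)) as [[Hub Hl] [t0 Ht0]].
    assert (HaM : 0 <= a M) by (apply Ha; lia).
    destruct (Req_dec (a M) 0) as [Hz|Hz]; [specialize (Hlast t0 Ht0); rewrite Hz in *; lra|].
    assert (HLM : L M <= (B - sumN M (fun j => a j * L j)) / a M).
    { apply Hl; intros t Ht; specialize (Hlast t Ht).
      apply Rmult_le_reg_l with (a M); [lra|]; field_simplify; lra. }
    apply Rmult_le_compat_l with (r := a M) in HLM; [|lra].
    replace (a M * ((B - sumN M (fun j => a j * L j)) / a M))
      with (B - sumN M (fun j => a j * L j)) in HLM by (field; lra).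
    lra.
Qed.

Definition simple_below_in (mu : (R -> Prop) -> R) (E : R -> Prop) (f : R -> R) (s : R) : Prop :=
  exists (N : nat) (c : nat -> R) (A : nat -> R -> Prop),
    (forall i, (i < N)%nat ->
       0 <= c i /\ borel (A i) /\ (forall x, A i x -> E x /\ 0 <= x /\ c i <= f x)) /\
    (forall i j x, (i < N)%nat -> (j < N)%nat -> i <> j -> A i x -> A j x -> False) /\
    s = sumN N (fun i => c i * mu (A i)).

Lemma simple_below_in_below mu E f s : simple_below_in mu E f s -> simple_below mu f s.
Proof.
  intros (N & c & A & H1 & H2 & H3); exists N, c, A; split; [|split; auto].
  intros i Hi; destruct (H1 i Hi) as (? & ? & H); repeat split; auto; intros; apply H; auto.
Qed.

Lemma simple_below_in0 mu E f : simple_below_in mu E f 0.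
Proof. exists O, (fun _ => 0), (fun _ _ => False); repeat split; intros; lia. Qed.

Lemma simple_below_in_mono mu E F f g s :
  (forall x, E x -> 0 <= x -> F x /\ f x <= g x) ->
  simple_below_in mu E f s -> simple_below_in mu F g s.
Proof.
  intros HEF (N & c & A & H1 & H2 & H3); exists N, c, A; split; [|split; auto].
  intros i Hi; destruct (H1 i Hi) as (? & ? & H); split; [auto|split; [auto|]].
  intros x Hx; destruct (H x Hx) as (HE & Hx0 & Hc); destruct (HEF x HE Hx0); split; [|split]; auto; lra.
Qed.

Lemma simple_below_in_scal mu E f s a : 0 <= a ->
  simple_below_in mu E f s -> simple_below_in mu E (fun x => a * f x) (a * s).
Proof.
  intros Ha (N & c & A & H1 & H2 & H3); exists N, (fun i => a * c i), A; split; [|split; auto].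
  - intros i Hi; destruct (H1 i Hi) as (Hc & Hb & H); split; [apply Rmult_le_pos; auto|split; auto].
    intros x Hx; destruct (H x Hx) as (? & ? & ?); split; [|split]; auto.
    apply Rmult_le_compat_l; auto.
  - rewrite H3, <- sumN_scal; apply sumN_ext; intros; lra.
Qed.

Lemma simple_below_in_or mu E F f s t :
  (forall x, E x -> F x -> False) ->
  simple_below_in mu E f s -> simple_below_in mu F f t ->
  simple_below_in mu (fun x => E x \/ F x) f (s + t).
Proof.
  intros Hd (N & c & A & H1 & H2 & H3) (N' & c' & A' & H1' & H2' & H3').
  exists (N + N')%nat, (fun i => if Nat.ltb i N then c i else c' (i - N)%nat),
    (fun i => if Nat.ltb i N then A i else A' (i - N)%nat).
  assert (HE : forall i x, (i < N)%nat -> A i x -> E x) by (intros i x Hi Hx; apply (H1 i Hi), Hx).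
  assert (HF : forall i x, (i < N')%nat -> A' i x -> F x) by (intros i x Hi Hx; apply (H1' i Hi), Hx).
  split; [|split].
  - intros i Hi; destruct (Nat.ltb_spec i N).
    + destruct (H1 i) as (? & ? & Hh); auto; split; [|split]; auto.
      intros x Hx; apply Hh in Hx; tauto.
    + destruct (H1' (i - N)%nat) as (? & ? & Hh); [lia|]; split; [|split]; auto.
      intros x Hx; apply Hh in Hx; tauto.
  - intros i j x Hi Hj Hij; destruct (Nat.ltb_spec i N), (Nat.ltb_spec j N); intros Hx Hy.
    + eapply H2; eauto.
    + apply (Hd x); [eapply HE|eapply HF]; eauto; lia.
    + apply (Hd x); [eapply HE|eapply HF]; eauto; lia.
    + eapply (H2' (i - N)%nat (j - N)%nat); eauto; lia.
  - rewrite sumN_add, H3, H3'; f_equal; apply sumN_ext; intros i Hi.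
    + destruct (Nat.ltb_spec i N); [reflexivity|lia].
    + destruct (Nat.ltb_spec (N + i) N); [lia|].
      replace (N + i - N)%nat with i by lia; reflexivity.
Qed.

Lemma simple_below_in_sumN mu f M (Es : nat -> R -> Prop) (s : nat -> R) :
  (forall j, (j < M)%nat -> simple_below_in mu (Es j) f (s j)) ->
  (forall i j x, (i < M)%nat -> (j < M)%nat -> i <> j -> Es i x -> Es j x -> False) ->
  simple_below_in mu (fun x => exists j, (j < M)%nat /\ Es j x) f (sumN M s).
Proof.
  induction M as [|M IH]; intros Hs Hd; [apply simple_below_in0|].
  rewrite sumN_S.
  apply simple_below_in_mono with (fun x => (exists j, (j < M)%nat /\ Es j x) \/ Es M x) f.
  - intros x [[j [Hj Hx]]|Hx] _; (split; [|lra]); [exists j|exists M]; split; auto; lia.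
  - apply simple_below_in_or; [|apply IH|apply Hs; lia].
    + intros x [j [Hj Hx]] Hy; eapply (Hd j M); eauto; lia.
    + intros; apply Hs; lia.
    + intros i j x Hi Hj; apply Hd; lia.
Qed.

Lemma simple_below_pow mu m N (r : nat -> R) (A : nat -> R -> Prop) :
  (forall i, (i < N)%nat -> borel (A i) /\ 0 <= r i /\ forall x, A i x -> 0 <= x /\ r i <= x) ->
  (forall i j x, (i < N)%nat -> (j < N)%nat -> i <> j -> A i x -> A j x -> False) ->
  simple_below mu (fun x => x ^ m) (sumN N (fun i => r i ^ m * mu (A i))).
Proof.
  intros HA Hd; exists N, (fun i => r i ^ m), A; split; [|split; auto].
  intros i Hi; destruct (HA i Hi) as (Hb & Hr & Hx); split; [apply pow_le; auto|split; auto].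
  intros x HxA; destruct (Hx x HxA); split; auto; apply pow_incr; auto.
Qed.

Lemma pow_amgm r k c : 0 <= r -> 0 < c -> 2 * r ^ S k <= c * r ^ k + r ^ S (S k) / c.
Proof.
  intros Hr Hc; simpl.
  assert (0 <= r ^ k * ((c - r) * (c - r)) / c).
  { apply Rmult_le_pos; [apply Rmult_le_pos; [apply pow_le; auto|apply Rle_0_sqr]|].
    left; apply Rinv_0_lt_compat; auto. }
  replace (c * r ^ k + r * (r * r ^ k) / c) with (2 * (r * r ^ k) + r ^ k * ((c - r) * (c - r)) / c)
    by (field; lra).
  lra.
Qed.

Lemma stieltjes_moment_amgm z k c : stieltjes_moment_seq z -> 0 < c ->
  2 * z (S k) <= c * z k + z (S (S k)) / c.
Proof.
  intros (mu & [Hpos _] & _ & Hint) Hc.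
  enough (z (S k) <= (c * z k + z (S (S k)) / c) / 2) by lra.
  apply (proj2 (Hint (S k))); intros s (N & cc & A & H1 & H2 & ->).
  set (r := fun i => nroot (S k) (cc i)).
  assert (Hr : forall i, (i < N)%nat ->
            borel (A i) /\ 0 <= r i /\ forall x, A i x -> 0 <= x /\ r i <= x).
  { intros i Hi; destruct (H1 i Hi) as (Hc0 & Hb & HA); split; [|split]; auto; [apply nroot_nonneg|].
    intros x Hx; destruct (HA x Hx); split; auto; apply nroot_le; auto; lia. }
  pose proof (proj1 (Hint k) _ (simple_below_pow mu k N r A Hr H2)) as Hk.
  pose proof (proj1 (Hint (S (S k))) _ (simple_below_pow mu (S (S k)) N r A Hr H2)) as Hk2.
  apply Rle_trans with
    (sumN N (fun i => (c * (r i ^ k * mu (A i)) + / c * (r i ^ S (S k) * mu (A i))) / 2)).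
  - apply sumN_le; intros i Hi; destruct (H1 i Hi) as (Hc0 & Hb & _).
    replace (cc i) with (r i ^ S k) by (apply nroot_pow; auto; lia).
    pose proof (Hpos _ Hb); pose proof (pow_amgm (r i) k c (nroot_nonneg _ _) Hc).
    unfold Rdiv in *; nra.
  - rewrite (sumN_ext N _ (fun i => / 2 * c * (r i ^ k * mu (A i))
                                  + / 2 * / c * (r i ^ S (S k) * mu (A i)))) by (intros; field; lra).
    rewrite sumN_plus, !sumN_scal.
    assert (0 < / c) by (apply Rinv_0_lt_compat; auto).
    unfold Rdiv; nra.
Qed.

Lemma stieltjes_moment_log_convex z k : stieltjes_moment_seq z ->
  0 < z k -> 0 < z (S k) -> z (S k) ^ 2 <= z k * z (S (S k)).
Proof.
  intros Hz H0 H1.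
  pose proof (stieltjes_moment_amgm z k (z (S k) / z k) Hz ltac:(apply Rdiv_lt_0_compat; auto)) as H.
  replace (z (S k) / z k * z k) with (z (S k)) in H by (field; lra).
  replace (z (S (S k)) / (z (S k) / z k)) with (z k * z (S (S k)) / z (S k)) in H by (field; lra).
  apply Rmult_le_reg_r with (/ z (S k)); [apply Rinv_0_lt_compat; auto|].
  replace (z (S k) ^ 2 * / z (S k)) with (z (S k)) by (field; lra).
  unfold Rdiv in H; lra.
Qed.

Definition dirac (a : R) (A : R -> Prop) : R := if excluded_middle_informative (A a) then 1 else 0.

Lemma dirac_in a A : A a -> dirac a A = 1.
Proof. intros H; unfold dirac; destruct excluded_middle_informative; tauto. Qed.

Lemma dirac_out a A : ~ A a -> dirac a A = 0.
Proof. intros H; unfold dirac; destruct excluded_middle_informative; tauto. Qed.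

Lemma sumN_delta N i0 f : (i0 < N)%nat -> (forall i, (i < N)%nat -> i <> i0 -> f i = 0) ->
  sumN N f = f i0.
Proof.
  induction N as [|N IH]; intros Hi0 Hf; [lia|rewrite sumN_S].
  destruct (Nat.eq_dec i0 N) as [->|Hne].
  - rewrite (sumN_ext N f (fun _ => 0)), sumN_const0; [lra|intros; apply Hf; lia].
  - rewrite IH, (Hf N); [lra|lia|lia|lia|intros; apply Hf; lia].
Qed.

Lemma dirac_measure a : borel_measure (dirac a).
Proof.
  split; [|split].
  - intros A _; unfold dirac; destruct excluded_middle_informative; lra.
  - apply dirac_out; tauto.
  - intros A _ Hd e He.
    destruct (classic (exists k, A k a)) as [[k0 HA]|Hn].
    + rewrite dirac_in by eauto; exists k0; intros n Hn.
      rewrite <- sumN_sum_f_R0, (sumN_delta _ k0), dirac_in; auto; [|lia|].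
      * unfold Rdist; rewrite Rminus_diag, Rabs_R0; lra.
      * intros i _ Hi; apply dirac_out; intros HAi; apply (Hd i k0 a); auto.
    + rewrite dirac_out by auto; exists 0%nat; intros n _.
      rewrite <- sumN_sum_f_R0, (sumN_ext _ _ (fun _ => 0)), sumN_const0.
      * unfold Rdist; rewrite Rminus_diag, Rabs_R0; lra.
      * intros i _; apply dirac_out; eauto.
Qed.

Lemma dirac_simple_le a f N (c : nat -> R) (A : nat -> R -> Prop) : 0 <= f a ->
  (forall i, (i < N)%nat -> forall x, A i x -> c i <= f x) ->
  (forall i j x, (i < N)%nat -> (j < N)%nat -> i <> j -> A i x -> A j x -> False) ->
  sumN N (fun i => c i * dirac a (A i)) <= f a.
Proof.
  intros Hfa Hc Hd.
  destruct (classic (exists i, (i < N)%nat /\ A i a)) as [[i0 [Hi0 HA]]|Hn].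
  - rewrite (sumN_delta _ i0), dirac_in, Rmult_1_r; eauto.
    intros i Hi Hne; rewrite dirac_out; [lra|intros HAi; apply (Hd i i0 a); auto].
  - rewrite (sumN_ext _ _ (fun _ => 0)), sumN_const0; auto.
    intros i Hi; rewrite dirac_out; [lra|eauto].
Qed.

Lemma dirac_moments a : 0 <= a -> stieltjes_moment_seq (fun m => a ^ m).
Proof.
  intros Ha; exists (dirac a); split; [apply dirac_measure|split].
  - apply dirac_out; lra.
  - intros m; split.
    + intros s (N & c & A & H1 & H2 & ->).
      apply (dirac_simple_le a (fun x => x ^ m)); auto; [apply pow_le; auto|].
      intros i Hi x Hx; apply (H1 i Hi), Hx.
    + intros b Hb; apply Hb; exists 1%nat, (fun _ => a ^ m), (fun _ x => x = a); split; [|split].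
      * intros i Hi; split; [apply pow_le; auto|split; [apply borel_eq|]].
        intros x ->; split; auto; lra.
      * intros; lia.
      * unfold sumN; simpl; rewrite dirac_in; auto; ring.
Qed.

Lemma pow_le_reg_exp2 m p : 2 ^ m <= 2 ^ p -> (m <= p)%nat.
Proof.
  intros H; destruct (Nat.le_gt_cases m p) as [|Hlt]; auto.
  pose proof (Rlt_pow 2 p m ltac:(lra) Hlt); lra.
Qed.

Lemma pow_le_reg_exp_half m p : (/ 2) ^ m <= (/ 2) ^ p -> (p <= m)%nat.
Proof.
  rewrite !pow_inv; intros H; apply pow_le_reg_exp2.
  rewrite <- (Rinv_inv (2 ^ m)), <- (Rinv_inv (2 ^ p)).
  apply Rinv_le_contravar; auto; apply Rinv_0_lt_compat, pow_lt; lra.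
Qed.

Lemma stieltjes_pow_subseq_midpoint (n : nat -> nat) a k : 0 < a ->
  stieltjes_moment_seq (fun k => a ^ n k) -> a ^ (2 * n (S k)) <= a ^ (n k + n (S (S k))).
Proof.
  intros Ha Hs; rewrite Nat.mul_comm, pow_mult, pow_add.
  apply (stieltjes_moment_log_convex (fun k => a ^ n k)); auto; apply pow_lt; auto.
Qed.

Lemma affine_of_midpoint (n : nat -> nat) : (n 0 <= n 1)%nat ->
  (forall k, n k + n (S (S k)) = 2 * n (S k))%nat ->
  forall k, n k = ((n 1 - n 0) * k + n 0)%nat.
Proof.
  intros H01 Hmid.
  enough (forall k, n k = ((n 1 - n 0) * k + n 0)%nat /\ n (S k) = ((n 1 - n 0) * S k + n 0)%nat)
    by (intros k; apply H).
  induction k as [|k [IH1 IH2]]; [split; lia|].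
  split; auto; pose proof (Hmid k); nia.
Qed.

Lemma stieltjes_subseq_affine (n : nat -> nat) :
  (forall i j : nat, (i < j)%nat -> (n i < n j)%nat) ->
  (forall y : nat -> R, stieltjes_moment_seq y -> stieltjes_moment_seq (fun k => y (n k))) ->
  exists d l : nat, forall k : nat, n k = (d * k + l)%nat.
Proof.
  intros Hinc H; exists (n 1%nat - n 0%nat)%nat, (n 0%nat); apply affine_of_midpoint.
  - apply Nat.lt_le_incl, Hinc; lia.
  - intros k; apply Nat.le_antisymm.
    + apply pow_le_reg_exp_half, stieltjes_pow_subseq_midpoint; [lra|].
      apply (H (fun m => (/ 2) ^ m)), dirac_moments; lra.
    + apply pow_le_reg_exp2, stieltjes_pow_subseq_midpoint; [lra|].
      apply (H (fun m => 2 ^ m)), dirac_moments; lra.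
Qed.

Lemma borel_pow_lt d a : (1 <= d)%nat -> borel (fun x => 0 <= x /\ x ^ d < a).
Proof.
  intros Hd; destruct (Rle_dec a 0).
  - apply borel_ext with (fun _ => False); [apply borel_False|].
    intros x; split; [tauto|intros [Hx Hlt]; pose proof (pow_le x d Hx); lra].
  - apply borel_ext with (fun x => 0 <= x /\ x < nroot d a); [apply borel_and; [apply borel_ge|apply borel_lt]|].
    intros x; split; intros [Hx H]; split; auto.
    + rewrite <- (nroot_pow d a) by (auto; lra); apply pow_lt_mono_base; auto.
    + apply Rnot_le_lt; intros Hle.
      assert (nroot d a ^ d <= x ^ d) by (apply pow_incr; split; auto; apply nroot_nonneg).
      rewrite nroot_pow in * by (auto; lra); lra.
Qed.

Lemma borel_nroot_lt d a : (1 <= d)%nat -> borel (fun t => 0 <= t /\ nroot d t < a).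
Proof.
  intros Hd; destruct (Rle_dec a 0).
  - apply borel_ext with (fun _ => False); [apply borel_False|].
    intros x; split; [tauto|intros [Hx Hlt]; pose proof (nroot_nonneg d x); lra].
  - apply borel_ext with (fun t => 0 <= t /\ t < a ^ d); [apply borel_and; [apply borel_ge|apply borel_lt]|].
    intros t; split; intros [Ht H]; split; auto.
    + apply Rnot_le_lt; intros Hle.
      assert (a ^ d <= nroot d t ^ d) by (apply pow_incr; split; lra).
      rewrite nroot_pow in * by auto; lra.
    + rewrite <- (nroot_pow d t) by auto; apply pow_lt_mono_base; auto; apply nroot_nonneg.
Qed.

(* The image of the measure x^l dmu(x) on [0, +oo) under x |-> x^d. *)
Definition image_measure (mu : (R -> Prop) -> R) (d l : nat) (A : R -> Prop) : R :=
  lubR (simple_below_in mu (fun x => A (x ^ d)) (fun x => x ^ l)).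

Section ImageMeasure.

Variables (mu : (R -> Prop) -> R) (y : nat -> R) (d l : nat).
Hypothesis mu_measure : borel_measure mu.
Hypothesis d_pos : (1 <= d)%nat.
Hypothesis mu_moments : forall n, integral_nonneg_eq mu (fun x => x ^ n) (y n).

Local Notation nu := (image_measure mu d l).

Lemma image_measure_is_lub A :
  is_lub (simple_below_in mu (fun x => A (x ^ d)) (fun x => x ^ l)) (nu A).
Proof.
  apply lubR_spec; [|exists 0; apply simple_below_in0].
  exists (y l); intros s Hs; apply (proj1 (mu_moments l)); eapply simple_below_in_below; eauto.
Qed.

Lemma image_measure_nonneg A : 0 <= nu A.
Proof. apply (image_measure_is_lub A), simple_below_in0. Qed.

Lemma image_measure_null A : (forall x, 0 <= x -> ~ A (x ^ d)) -> nu A = 0.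
Proof.
  intros HA; destruct (image_measure_is_lub A) as [Hub Hl].
  apply Rle_antisym; [|apply image_measure_nonneg].
  apply Hl; intros s (N & c & B & H1 & H2 & ->).
  rewrite <- (sumN_const0 N); apply Req_le, sumN_ext; intros i Hi.
  replace (B i) with (fun _ : R => False); [rewrite (proj1 (proj2 mu_measure)); lra|].
  apply set_ext; intros x; split; [tauto|intros Hx].
  destruct (H1 i Hi) as (_ & _ & HB); destruct (HB x Hx) as (? & ? & _); apply (HA x); auto.
Qed.

Lemma image_measure_sumN_le (A : nat -> R -> Prop) :
  (forall i j x, i <> j -> A i x -> A j x -> False) ->
  forall M, sumN M (fun k => nu (A k)) <= nu (fun x => exists k, A k x).
Proof.
  intros Hd M.
  rewrite (sumN_ext M _ (fun k => 1 * nu (A k))) by (intros; lra).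
  apply sumN_is_lub_le with (T := fun k => simple_below_in mu (fun x => A k (x ^ d)) (fun x => x ^ l)).
  - intros j _; split; [apply image_measure_is_lub|exists 0; apply simple_below_in0].
  - intros; lra.
  - intros s Hs; apply (image_measure_is_lub (fun x => exists k, A k x)).
    rewrite (sumN_ext M _ s) by (intros; lra).
    apply simple_below_in_mono with (fun x => exists j, (j < M)%nat /\ A j (x ^ d)) (fun x => x ^ l).
    + intros x [j [_ Hj]] _; split; [exists j|]; auto; lra.
    + apply simple_below_in_sumN; auto; intros i j x _ _ Hij; apply Hd; auto.
Qed.

(* Cut each level set of the simple function along the preimages of the A k
   and use the countable additivity of mu. *)
Lemma image_measure_simple_series (A : nat -> R -> Prop) s :
  (forall k, borel (A k)) -> (forall i j x, i <> j -> A i x -> A j x -> False) ->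
  simple_below_in mu (fun x => exists k, A k (x ^ d)) (fun x => x ^ l) s ->
  exists h, (forall k, h k <= nu (A k)) /\ Un_cv (fun K => sum_f_R0 h K) s.
Proof.
  intros HA Hd (N & c & B & H1 & H2 & ->).
  set (B' := fun i k x => B i x /\ (0 <= x /\ A k (x ^ d))).
  assert (HB' : forall i k, (i < N)%nat -> borel (B' i k)).
  { intros i k Hi; apply borel_and; [apply (H1 i Hi)|].
    apply borel_preimage_nonneg; auto; intros; apply borel_pow_lt; auto. }
  exists (fun k => sumN N (fun i => c i * mu (B' i k))); split.
  - intros k; apply (image_measure_is_lub (A k)); exists N, c, (fun i => B' i k); split; [|split].
    + intros i Hi; destruct (H1 i Hi) as (Hc & _ & HBi); split; [|split]; auto.
      intros x [Hx [Hx0 HAk]]; destruct (HBi x Hx) as (_ & _ & Hcx); auto.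
    + intros i j x Hi Hj Hij [Hx _] [Hy _]; eapply H2; eauto.
    + reflexivity.
  - apply (Un_cv_ext (fun K => sumN N (fun i => c i * sum_f_R0 (fun k => mu (B' i k)) K))).
    { intros K; rewrite sum_f_R0_sumN_comm; apply sumN_ext; intros i _.
      rewrite scal_sum; apply sum_eq; intros; ring. }
    apply Un_cv_sumN; intros i Hi.
    replace (mu (B i)) with (mu (fun x => exists k, B' i k x)).
    + apply (proj2 (proj2 mu_measure)); [intros k; apply HB'; auto|].
      intros k k' x Hkk' [_ [_ H]] [_ [_ H']]; apply (Hd k k' (x ^ d)); auto.
    + f_equal; apply set_ext; intros x; split; [intros [k [Hx _]]; auto|intros Hx].
      destruct (proj2 (proj2 (H1 i Hi)) x Hx) as ([k Hk] & Hx0 & _); exists k; split; auto.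
Qed.

Lemma image_measure_additive (A : nat -> R -> Prop) :
  (forall k, borel (A k)) -> (forall i j x, i <> j -> A i x -> A j x -> False) ->
  infinite_sum (fun k => nu (A k)) (nu (fun x => exists k, A k x)).
Proof.
  intros HA Hd e He.
  destruct (is_lub_approx _ _ (e / 2) (image_measure_is_lub (fun x => exists k, A k x)))
    as [s [Hs Hse]]; [lra|].
  destruct (image_measure_simple_series A s HA Hd Hs) as [h [Hh Hcv]].
  destruct (Hcv (e / 2)) as [K0 HK0]; [lra|].
  exists K0; intros n Hn; specialize (HK0 n Hn).
  assert (sum_f_R0 h n <= sum_f_R0 (fun k => nu (A k)) n) by (apply sum_Rle; intros; apply Hh).
  pose proof (image_measure_sumN_le A Hd (S n)) as Hle; rewrite sumN_sum_f_R0 in Hle.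
  unfold Rdist in *; apply Rabs_def2 in HK0; apply Rabs_def1; lra.
Qed.

Lemma image_measure_borel_measure : borel_measure nu.
Proof.
  split; [|split].
  - intros A _; apply image_measure_nonneg.
  - apply image_measure_null; tauto.
  - intros A HA Hd; apply image_measure_additive; auto.
Qed.

Lemma image_measure_supported : supported_nonneg nu.
Proof. apply image_measure_null; intros x Hx H; pose proof (pow_le x d Hx); lra. Qed.

Lemma image_measure_moment_upper k :
  is_upper_bound (simple_below nu (fun t => t ^ k)) (y (d * k + l)%nat).
Proof.
  intros s (N & a & A & H1 & H2 & ->).
  apply sumN_is_lub_le with (T := fun j => simple_below_in mu (fun x => A j (x ^ d)) (fun x => x ^ l)).
  - intros j _; split; [apply image_measure_is_lub|exists 0; apply simple_below_in0].
  - intros j Hj; apply (proj1 (H1 j Hj)).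
  - intros s Hs; apply (proj1 (mu_moments (d * k + l)%nat)).
    apply simple_below_in_below with (fun x => exists j, (j < N)%nat /\ A j (x ^ d)).
    apply simple_below_in_sumN; [|intros i j x Hi Hj Hij; apply H2; auto].
    intros j Hj; apply simple_below_in_mono with (fun x => A j (x ^ d)) (fun x => a j * x ^ l).
    + intros x HA Hx; split; auto.
      destruct (H1 j Hj) as (_ & _ & HAj); destruct (HAj _ HA) as [_ Hak].
      rewrite pow_add, pow_mult; apply Rmult_le_compat_r; auto; apply pow_le; auto.
    + apply simple_below_in_scal; [apply (proj1 (H1 j Hj))|apply Hs; auto].
Qed.

Lemma image_measure_mass_le B b :
  borel B -> (forall x, B x -> 0 <= x /\ b <= x ^ l) -> 0 <= b ->
  b * mu B <= nu (fun t => 0 <= t /\ B (nroot d t)).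
Proof.
  intros HB Hb Hb0; apply (image_measure_is_lub (fun t => 0 <= t /\ B (nroot d t))).
  exists 1%nat, (fun _ => b), (fun _ => B); split; [|split].
  - intros j _; split; [|split]; auto; intros x Hx; destruct (Hb x Hx) as [Hx0 Hbx].
    split; [|split]; auto; split; [apply pow_le; auto|rewrite pow_nroot; auto].
  - intros; lia.
  - unfold sumN; simpl; ring.
Qed.

Lemma image_measure_simple_lower k N (c a b : nat -> R) (B : nat -> R -> Prop) :
  (forall i, (i < N)%nat -> borel (B i) /\ (forall x, B i x -> 0 <= x)) ->
  (forall i j x, (i < N)%nat -> (j < N)%nat -> i <> j -> B i x -> B j x -> False) ->
  (forall i, (i < N)%nat -> 0 <= a i /\ 0 <= b i /\ c i <= a i * b i /\
      forall x, B i x -> a i <= (x ^ d) ^ k /\ b i <= x ^ l) ->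
  exists s, simple_below nu (fun t => t ^ k) s /\ sumN N (fun i => c i * mu (B i)) <= s.
Proof.
  intros H1 H2 Hab; set (A := fun i t => 0 <= t /\ B i (nroot d t)).
  exists (sumN N (fun i => a i * nu (A i))); split.
  - exists N, a, A; split; [|split; auto].
    + intros i Hi; destruct (Hab i Hi) as (Ha & _ & _ & Hx); destruct (H1 i Hi) as (HBb & _).
      split; auto; split.
      * apply borel_preimage_nonneg; auto; intros; apply borel_nroot_lt; auto.
      * intros t [Ht HBt]; split; auto; destruct (Hx _ HBt) as [Hak _]; rewrite nroot_pow in Hak; auto.
    + intros i j t Hi Hj Hij [_ Hti] [_ Htj]; eapply H2; eauto.
  - apply sumN_le; intros i Hi; destruct (Hab i Hi) as (Ha & Hb & Hc & Hx).
    destruct (H1 i Hi) as (HBb & HB0).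
    assert (Hmu : 0 <= mu (B i)) by (apply (proj1 mu_measure); auto).
    assert (b i * mu (B i) <= nu (A i)).
    { apply image_measure_mass_le; auto; intros x HxB; split; [apply HB0|apply Hx]; auto. }
    apply Rle_trans with (a i * (b i * mu (B i))); [rewrite <- Rmult_assoc|];
      [apply Rmult_le_compat_r|apply Rmult_le_compat_l]; auto.
Qed.

Lemma image_measure_moments k : integral_nonneg_eq nu (fun t => t ^ k) (y (d * k + l)%nat).
Proof.
  split; [apply image_measure_moment_upper|].
  intros u Hu; apply (proj2 (mu_moments (d * k + l)%nat)).
  intros s (N & c & B & H1 & H2 & ->).
  assert (HB : forall i, (i < N)%nat -> borel (B i) /\ (forall x, B i x -> 0 <= x))
    by (intros i Hi; destruct (H1 i Hi) as (_ & ? & HB); split; auto; apply HB).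
  enough (exists s, simple_below nu (fun t => t ^ k) s /\ sumN N (fun i => c i * mu (B i)) <= s)
    as (s & Hs & Hle) by (apply Rle_trans with s; auto).
  destruct (Nat.eq_dec (d * k + l) 0) as [Hz|Hnz].
  - assert (k = 0%nat) as -> by nia; assert (Hl : l = 0%nat) by nia.
    apply (image_measure_simple_lower 0 N c c (fun _ => 1) B); auto.
    intros i Hi; destruct (H1 i Hi) as (? & ? & HBi); split; [|split; [lra|split; [lra|]]]; auto.
    intros x Hx; destruct (HBi x Hx) as [_ Hc]; rewrite Hz in Hc; rewrite Hl; simpl in *; lra.
  - set (r := fun i => nroot (d * k + l) (c i)).
    apply (image_measure_simple_lower k N c (fun i => r i ^ (d * k)) (fun i => r i ^ l) B); auto.
    intros i Hi; destruct (H1 i Hi) as (Hc0 & _ & HBi).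
    pose proof (nroot_nonneg (d * k + l) (c i)) as Hr0.
    split; [apply pow_le; auto|split; [apply pow_le; auto|split]].
    + rewrite <- pow_add; unfold r; rewrite nroot_pow; auto; [lra|lia].
    + intros x Hx; destruct (HBi x Hx) as [Hx0 Hcx].
      assert (r i <= x) by (apply nroot_le; auto; lia).
      rewrite <- pow_mult; split; apply pow_incr; auto.
Qed.

End ImageMeasure.

Lemma stieltjes_moment_affine_subseq y d l : (1 <= d)%nat -> stieltjes_moment_seq y ->
  stieltjes_moment_seq (fun k => y (d * k + l)%nat).
Proof.
  intros Hd (mu & Hm & _ & Hint); exists (image_measure mu d l); split; [|split].
  - apply (image_measure_borel_measure mu y); auto.
  - apply (image_measure_supported mu y); auto.
  - intros k; apply image_measure_moments; auto.
Qed.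

Theorem theorem4p3 (n : nat -> nat)
  (Hinc : forall i j : nat, (i < j)%nat -> (n i < n j)%nat) :
  (forall y : nat -> R, stieltjes_moment_seq y ->
     stieltjes_moment_seq (fun k => y (n k)))
  <-> exists d l : nat, forall k : nat, n k = (d * k + l)%nat.
Proof.
  split; [apply stieltjes_subseq_affine; auto|].
  intros [d [l Hn]] y Hy.
  assert (Hd : (1 <= d)%nat) by (pose proof (Hinc 0%nat 1%nat ltac:(lia)) as H; rewrite !Hn in H; nia).
  replace (fun k => y (n k)) with (fun k => y (d * k + l)%nat)
    by (apply functional_extensionality; intros k; rewrite Hn; reflexivity).
  apply stieltjes_moment_affine_subseq; auto.
Qed.
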